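(* For every integer $k\ge 2$, the renormalization constant $r_k$ of $SG_k$ satisfies $r_k>\dfrac{2}{3k}$.
   Context: Let $q_0,q_1,q_2$ be the vertices of an equilateral triangle $T$ in $\mathbb R^2$ with side length $1$. Fix $k\ge2$ and let $d=k(k+1)/2$. $SG_k$ is the self-similar set $K=\bigcup_{i=0}^{d-1}F_i(K)$. Here $F_i(x)=x/k+b_i$ are the similitudes mapping $T$ onto the $d$ triangles of side $1/k$ having the same orientation as $T$ in the subdivision of $T$ into $k^2$ such triangles. Set $V_0=\{q_0,q_1,q_2\}$ and $V_1=\bigcup_i F_i(V_0)$. The graph $\Gamma_1$ has vertex set $V_1$, with $x\sim_1 y$ iff $x\neq y$ and both lie in some $F_i(V_0)$. The complete graph on $V_0$ is $\Gamma_0$. With $\mathcal E_m(u)=r^{-m}\sum_{x\sim_m y}(u(x)-u(y))^2$, the renormalization constant $r_k>0$ is the unique $r$ such that for all $u:V_0\to\mathbb R$, $\min\{\mathcal E_1(\tilde u):\tilde u|_{V_0}=u\}=\mathcal E_0(u)$. *)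

From HB Require Import structures.
From mathcomp Require Import all_boot all_order all_algebra.
Set Implicit Arguments. Unset Strict Implicit. Unset Printing Implicit Defensive.
Import Order.TTheory GRing.Theory Num.Theory.
Local Open Scope ring_scope.

(* Encoding of SG_k, level 1.  Points of the triangle T with vertices
   q0, q1, q2 are described by lattice coordinates (a,b):
   the point q0 + (a/k)(q1 - q0) + (b/k)(q2 - q0).
   V_1 is exactly the set of lattice points with a,b >= 0, a + b <= k. *)
Definition vtx (k : nat) : Type := ('I_k.+1 * 'I_k.+1)%type.

(* The upward cell c = (i,j) (with i + j < k) is the image F_c(T): the
   triangle with vertices (i,j), (i+1,j), (i,j+1). These are exactly the
   d = k(k+1)/2 cells of side 1/k with the orientation of T. *)
Definition in_cell (k : nat) (c x : vtx k) : bool :=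
  [&& (c.1 + c.2 < k)%N &
   [|| (x.1 == c.1 :> nat) && (x.2 == c.2 :> nat),
       (x.1 == c.1.+1 :> nat) && (x.2 == c.2 :> nat) |
       (x.1 == c.1 :> nat) && (x.2 == c.2.+1 :> nat)]].

Definition inV1 (k : nat) (x : vtx k) : bool := [exists c : vtx k, in_cell c x].

Definition adj1 (k : nat) (x y : vtx k) : bool :=
  (x != y) && [exists c : vtx k, in_cell c x && in_cell c y].

Definition corner (k : nat) (i : 'I_3) : vtx k :=
  if (i == 0 :> nat) then (ord0, ord0)
  else if (i == 1 :> nat) then (ord_max, ord0)
  else (ord0, ord_max).

(* E_0(u) = sum over unordered pairs {x,y} of V_0 with x <> y
   (written as half the sum over ordered pairs). *)
Definition E0 (R : realFieldType) (u : 'I_3 -> R) : R :=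
  2^-1 * \sum_(i : 'I_3) \sum_(j : 'I_3 | i != j) (u i - u j) ^+ 2.

Definition E1 (R : realFieldType) (k : nat) (r : R) (v : vtx k -> R) : R :=
  r^-1 * (2^-1 * \sum_(x : vtx k) \sum_(y : vtx k | adj1 x y) (v x - v y) ^+ 2).

Definition extends (R : realFieldType) (k : nat) (u : 'I_3 -> R) (v : vtx k -> R) : Prop :=
  forall i : 'I_3, v (corner k i) = u i.

Definition is_renorm_const (R : realFieldType) (k : nat) (r : R) : Prop :=
  forall u : 'I_3 -> R,
    (exists v : vtx k -> R, @extends R k u v /\ E1 r v = E0 u) /\
    (forall v : vtx k -> R, @extends R k u v -> E0 u <= E1 r v).

From Pilot Require Import Defs.
From HB Require Import structures.
From mathcomp Require Import all_boot all_order all_algebra ring lra zify.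
Import Order.TTheory GRing.Theory Num.Theory.
Local Open Scope ring_scope.

(* Test the renormalization identity on u = (1,0,0), for which E_0(u) = 2.
   Along each of the sides q0q1 and q0q2 of T an extension v runs through k
   edges of Gamma_1 and drops from 1 to 0, so by Cauchy-Schwarz each side
   contributes at least 1/k to the sum over the edges; hence the minimal E_1(v),
   namely E_0(u) = 2, is at least 2/(k r), i.e. r >= 1/k > 2/(3k). *)

(* [matrix] also exports an [adj1]. *)
Local Notation adj1 := Defs.adj1.

Lemma sum_sqr_increments_ge {R : realFieldType} {k : nat} (t : nat -> R) :
  (0 < k)%N -> (t 0%N - t k) ^+ 2 / k%:R <= \sum_(a < k) (t a - t a.+1) ^+ 2.
Proof.
move=> k_gt0; set c := (t 0%N - t k) / k%:R.
have kc : k%:R * c = t 0%N - t k by rewrite mulrC divfK // pnatr_eq0 -lt0n.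
have telescope : \sum_(a < k) (t a - t a.+1) = t 0%N - t k.
  rewrite -(big_mkord xpredT (fun a => t a - t a.+1)).
  rewrite (eq_bigr (fun a => - (t a.+1 - t a))) => [|a _]; last by rewrite opprB.
  by rewrite sumrN telescope_sumr // opprB.
have dev_ge0 : 0 <= \sum_(a < k) (t a - t a.+1 - c) ^+ 2.
  by apply: sumr_ge0 => a _; exact: sqr_ge0.
have dev : \sum_(a < k) (t a - t a.+1 - c) ^+ 2 = \sum_(a < k) (t a - t a.+1) ^+ 2
    - c *+ 2 * \sum_(a < k) (t a - t a.+1) + \sum_(a < k) c ^+ 2.
  by rewrite mulr_sumr -sumrB -big_split /=; apply: eq_bigr => a _; ring.
have -> : (t 0%N - t k) ^+ 2 / k%:R = c * (t 0%N - t k) by rewrite expr2 mulrAC.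
have ck : c ^+ 2 *+ k = c * (t 0%N - t k) by rewrite -kc; ring.
move: dev_ge0; rewrite dev telescope sumr_const card_ord ck; lra.
Qed.

Lemma sumr_inj_le {R : numDomainType} {I J : finType} {f : I -> J} {F : J -> R} :
  injective f -> (forall j, 0 <= F j) -> \sum_i F (f i) <= \sum_j F j.
Proof.
move=> f_inj F_ge0.
have -> : \sum_i F (f i) = \sum_(j in f @: setT) F j.
  by rewrite big_imset; [apply: eq_bigl => i; rewrite inE | move=> x y _ _ /f_inj].
by rewrite [leRHS](bigID (mem (f @: setT))) /= lerDl sumr_ge0.
Qed.

Lemma adj1C (k : nat) (x y : vtx k) : adj1 x y = adj1 y x.
Proof.
by rewrite /adj1 eq_sym; congr (_ && _); apply: eq_existsb => c; rewrite andbC.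
Qed.

Section Sides.

Variable k : nat.

Definition side_pt (s : bool) (a : nat) : vtx k :=
  if s then (inord a, ord0) else (ord0, inord a).

Lemma side_pt_coord_sum s a : (a <= k)%N -> ((side_pt s a).1 + (side_pt s a).2)%N = a.
Proof. by move=> ak; case: s; rewrite /= inordK ?addn0. Qed.

Lemma side_pt0 s : side_pt s 0 = corner k 0.
Proof. by case: s; congr pair; apply: val_inj; rewrite /= inordK. Qed.

Lemma side_ptk s : side_pt s k = corner k (if s then 1 else 2).
Proof. by case: s; congr pair; apply: val_inj; rewrite /= inordK. Qed.

Lemma adj1_side_pt s (a : 'I_k) : adj1 (side_pt s a) (side_pt s a.+1).
Proof.
have ak := ltn_ord a; apply/andP; split.
  apply/eqP => /(congr1 (fun x : vtx k => (x.1 + x.2)%N)).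
  by rewrite !side_pt_coord_sum //; lia.
by apply/existsP; exists (side_pt s a); case: s; rewrite /in_cell /= !inordK //; lia.
Qed.

Definition side_edge (q : bool * bool * 'I_k) : vtx k * vtx k :=
  let: (s, o, a) := q in
  if o then (side_pt s a, side_pt s a.+1) else (side_pt s a.+1, side_pt s a).

Lemma side_edge_inj : injective side_edge.
Proof.
move=> [[s o] a] [[s' o'] a'] /=; have ak := ltn_ord a; have ak' := ltn_ord a'.
case: s s' o o' => [] [] [] [];
  move=> /(congr1 (fun e => (nat_of_ord e.1.1, nat_of_ord e.1.2,
                             nat_of_ord e.2.1, nat_of_ord e.2.2))) /=;
  rewrite ?inordK //; try lia;
  case=> *; have -> : a = a' by apply: ord_inj; lia.
all: by [] || (exfalso; lia).
Qed.

End Sides.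

Section Energy.

Context {R : realFieldType} {k : nat} (v : vtx k -> R).

(* Ordered pairs: twice the sum over the edges of Gamma_1, the bracket in E1. *)
Definition edge_energy : R :=
  \sum_(x : vtx k) \sum_(y : vtx k | adj1 x y) (v x - v y) ^+ 2.

Definition side_energy (s : bool) : R :=
  \sum_(a < k) (v (side_pt k s a) - v (side_pt k s a.+1)) ^+ 2.

Lemma side_energy_le : (side_energy true + side_energy false) *+ 2 <= edge_energy.
Proof.
pose G (e : vtx k * vtx k) := if adj1 e.1 e.2 then (v e.1 - v e.2) ^+ 2 else 0.
have -> : edge_energy = \sum_e G e.
  by rewrite /edge_energy; under eq_bigr do rewrite big_mkcond; rewrite pair_big.
have G_ge0 e : 0 <= G e by rewrite /G; case: ifP => _; rewrite ?sqr_ge0.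
have G_side s o : \sum_(a < k) G (side_edge k (s, o, a)) = side_energy s.
  apply: eq_bigr => a _.
  by case: o; rewrite /G /= ?adj1_side_pt // adj1C adj1_side_pt -opprB sqrrN.
apply: le_trans (sumr_inj_le (side_edge_inj k) G_ge0).
have -> : \sum_q G (side_edge k q)
    = \sum_(s : bool) \sum_(o : bool) \sum_(a < k) G (side_edge k (s, o, a)).
  by rewrite [RHS]pair_big [RHS]pair_big; apply: eq_bigr => -[[s o] a].
by rewrite !big_bool !G_side mulrnDl !mulr2n.
Qed.

Lemma side_energy_ge s : (0 < k)%N ->
  (v (corner k 0) - v (side_pt k s k)) ^+ 2 / k%:R <= side_energy s.
Proof.
move=> k_gt0; rewrite -(side_pt0 k s).
exact: (sum_sqr_increments_ge (fun a => v (side_pt k s a)) k_gt0).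
Qed.

Lemma edge_energy_ge : (0 < k)%N ->
  ((v (corner k 0) - v (corner k 1)) ^+ 2 + (v (corner k 0) - v (corner k 2)) ^+ 2)
    *+ 2 / k%:R <= edge_energy.
Proof.
move=> k_gt0; apply: le_trans side_energy_le.
rewrite mulrnAl mulrDl lerMn2r /= lerD //.
  by rewrite -(side_ptk k true) side_energy_ge.
by rewrite -(side_ptk k false) side_energy_ge.
Qed.

End Energy.

Theorem lemma2p2 (R : realFieldType) (k : nat) (hk : (2 <= k)%N) (r : R) (hr : 0 < r) :
  is_renorm_const k r -> 2 / (3 * k%:R) < r.
Proof.
pose u (i : 'I_3) : R := if i == 0 :> nat then 1 else 0.
move=> /(_ u) [[v [v_ext E1v]] _].
have E0u : E0 u = 2.
  rewrite /E0 /u; under eq_bigr do rewrite big_mkcond; rewrite !big_ord_recl !big_ord0 /=.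
  by field.
have energy_v : edge_energy v = 4 * r.
  rewrite E0u /E1 -/(edge_energy v) in E1v.
  have -> : edge_energy v = r * 2 * (r^-1 * (2^-1 * edge_energy v)) by field; rewrite gt_eqF.
  by rewrite E1v; ring.
have := edge_energy_ge v (ltnW hk); rewrite !v_ext /u /= energy_v.
have k_gt0 : 0 < k%:R^-1 :> R by rewrite invr_gt0 ltr0n; lia.
rewrite invfM mulrA; lra.
Qed.
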